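(* Let $\lambda$ be a positive integer that is a sum of two squares of rational integers. Then for every $1\leq k\leq 3$, every $k$-icube in $\mathbb{Z}[i]^3$ of norm $\lambda$ can be extended to a $3$-icube (of norm $\lambda$).
   Context: For $1\leq k\leq n$, a matrix $(v_1|\dotsc|v_k)\in\mathbb{Z}[i]^{n\times k}$ is a $k$-icube in $\mathbb{Z}[i]^n$ of norm $\lambda>0$ if $v_i^*v_j=\lambda$ for $i=j$ and $v_i^*v_j=0$ for $i\neq j$, where $v^*=\overline{v}^T$. An $\ell$-icube $A$ can be extended to a $k$-icube ($\ell<k$) if some $\ell$ columns of some $k$-icube form $A$. *)

From HB Require Import structures.
From mathcomp Require Import all_boot all_order all_algebra all_field.
Set Implicit Arguments. Unset Strict Implicit. Unset Printing Implicit Defensive.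
Import Order.TTheory GRing.Theory Num.Theory.
Local Open Scope ring_scope.

Definition gaussInt (z : algC) : bool :=
  ('Re z \is a Num.int) && ('Im z \is a Num.int).

Definition gaussMx m n (A : 'M[algC]_(m, n)) : Prop :=
  forall i j, gaussInt (A i j).

Definition adjmx m n (A : 'M[algC]_(m, n)) : 'M[algC]_(n, m) :=
  (map_mx Num.conj A)^T.

(* (v_1|...|v_k) in Z[i]^{n x k} is a k-icube of norm lam:
   v_i^* v_j = lam if i = j and 0 otherwise, i.e. A^* A = lam I_k. *)
Definition icube n k (lam : algC) (A : 'M[algC]_(n, k)) : Prop :=
  gaussMx A /\ adjmx A *m A = lam%:M.

Definition icube_extends n l k (lam : algC) (A : 'M[algC]_(n, l)) : Prop :=
  exists (B : 'M[algC]_(n, k)) (f : 'I_l -> 'I_k),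
    icube lam B /\ injective f /\ colsub f B = A.

From HB Require Import structures.
From mathcomp Require Import all_boot all_order all_algebra all_field.
From mathcomp Require Import ring zify.
Set Implicit Arguments. Unset Strict Implicit. Unset Printing Implicit Defensive.
Import Order.TTheory GRing.Theory Num.Theory.
Local Open Scope ring_scope.

(* Write [lam = gnorm mu] with [mu = a + b i].  Two orthogonal columns [v1], [v2]
   are completed by their conjugated cross product [w], of norm [lam^2]: writing
   [w = g u] with [u] primitive, the expansion of a dual vector of [u] in the
   orthogonal frame shows [lam | gnorm g], so [g] has a divisor of norm [lam],
   and dividing [w] by it gives the third column.
   A single column [v = g v'] with [v'] primitive is completed inside the
   Lorentzian lattice Z[i]^(3,1): [(v', nu)] is isotropic and, with [(a, 0)]
   where [a^* v' = 1], spans a unimodular hyperbolic plane.  Its orthogonal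
   complement is positive definite and represents 1, by a Euclidean descent on
   the norm of a primitive vector, and a unit vector [(b, t)] there yields the
   column [nu b - t v'] orthogonal to [v']. *)

Definition Zi : {pred algC} := fun z => gaussInt z.

Lemma ZiP z : reflect (exists a b : int, z = a%:~R + 'i * b%:~R) (z \in Zi).
Proof.
apply: (iffP andP) => [[/intrP[a ha] /intrP[b hb]]|[a [b ->]]].
  by exists a, b; rewrite [LHS]Crect ha hb.
have ra : (a%:~R : algC) \is Num.real by rewrite Rreal_int ?intr_int.
have rb : (b%:~R : algC) \is Num.real by rewrite Rreal_int ?intr_int.
by rewrite Re_rect // Im_rect // !intr_int.
Qed.

Lemma Zi_subring_closed : subring_closed Zi.
Proof.
have sqi : 'i ^+ 2 + 1 = 0 :> algC by rewrite sqrCi addNr.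
split; first by apply/ZiP; exists 1, 0; rewrite mulr0 addr0.
  move=> x y /ZiP[a [b ->]] /ZiP[c [d ->]]; apply/ZiP; exists (a - c), (b - d).
  by rewrite !rmorphB; ring.
move=> x y /ZiP[a [b ->]] /ZiP[c [d ->]]; apply/ZiP.
exists (a * c - b * d), (a * d + b * c); rewrite !rmorphB !rmorphD !rmorphM /=.
apply/eqP; rewrite -subr_eq0; apply/eqP.
by transitivity ((('i : algC) ^+ 2 + 1) * (b%:~R * d%:~R)); [ring | rewrite sqi mul0r].
Qed.

HB.instance Definition _ := GRing.isSubringClosed.Build algC Zi Zi_subring_closed.

Lemma Zi_conj z : z \in Zi -> z^* \in Zi.
Proof.
move=> /ZiP[a [b ->]]; apply/ZiP; exists a, (- b).
by rewrite rmorphD rmorphM /= conjCi !rmorph_int mulrNz; ring.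
Qed.

Lemma Zi_nat_ge0 z : z \in Zi -> 0 <= z -> exists k : nat, z = k%:R.
Proof.
move=> /ZiP[a [b ez]] z_ge0.
have ra : (a%:~R : algC) \is Num.real by rewrite Rreal_int ?intr_int.
have rb : (b%:~R : algC) \is Num.real by rewrite Rreal_int ?intr_int.
have : 'Im z = 0 by apply/Creal_ImP; exact: ger0_real.
rewrite ez Im_rect // => /eqP; rewrite intr_eq0 => /eqP b0.
move: z_ge0; rewrite ez b0 mulr0 addr0 ler0z => a_ge0.
by exists `|a|%N; rewrite natr_absz ger0_norm.
Qed.

Definition gnorm (z : algC) := z * z^*.

Lemma gnorm_rect (a b : int) : gnorm (a%:~R + 'i * b%:~R) = (a ^+ 2 + b ^+ 2)%:~R.
Proof.
rewrite /gnorm rmorphD rmorphM /= conjCi !rmorph_int rmorphD /= !rmorphXn.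
transitivity ((a%:~R : algC) ^+ 2 + b%:~R ^+ 2 - ('i ^+ 2 + 1) * b%:~R ^+ 2); first ring.
by rewrite sqrCi addNr mul0r subr0.
Qed.

Lemma gnormE z : gnorm z = `|z| ^+ 2. Proof. by rewrite normCK. Qed.
Lemma gnormM x y : gnorm (x * y) = gnorm x * gnorm y.
Proof. by rewrite /gnorm rmorphM /=; ring. Qed.
Lemma gnormV z : gnorm z^-1 = (gnorm z)^-1.
Proof. by rewrite /gnorm fmorphV invfM. Qed.
Lemma gnorm_conj z : gnorm z^* = gnorm z.
Proof. by rewrite /gnorm conjCK mulrC. Qed.
Lemma gnorm_eq0 z : (gnorm z == 0) = (z == 0).
Proof. by rewrite gnormE expf_eq0 /= normr_eq0. Qed.
Lemma gnorm_gt0 z : z != 0 -> 0 < gnorm z.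
Proof. by move=> z0; rewrite gnormE exprn_gt0 // normr_gt0. Qed.
Lemma gnorm_ge0 z : 0 <= gnorm z.
Proof. by rewrite gnormE exprn_ge0. Qed.
Lemma Zi_gnorm z : z \in Zi -> gnorm z \in Zi.
Proof. by move=> Zz; rewrite rpredM ?Zi_conj. Qed.

Definition gnormn z := Num.truncn (gnorm z).

Lemma gnormnE z : z \in Zi -> (gnormn z)%:R = gnorm z.
Proof.
move=> Zz; have [n en] := Zi_nat_ge0 (Zi_gnorm Zz) (gnorm_ge0 z).
by rewrite /gnormn en natrK.
Qed.

Lemma gnormn_eq0 z : z \in Zi -> (gnormn z == 0)%N = (z == 0).
Proof. by move=> Zz; rewrite -(eqr_nat algC) gnormnE // gnorm_eq0. Qed.

(* Round the real and imaginary parts of [a b^* / gnorm b] to the nearest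
   integers; each rounding error is at most 1/2, whence [2 |r|^2 <= |b|^2]. *)
Lemma Zi_divmod a b : a \in Zi -> b \in Zi -> b != 0 ->
  exists q r, [/\ q \in Zi, r \in Zi, a = b * q + r & (2 * gnormn r <= gnormn b)%N].
Proof.
move=> Za Zb b0; have /ZiP[p1 [p2 ep]] : a * b^* \in Zi by rewrite rpredM ?Zi_conj.
set n := gnormn b; pose N : int := n%:Z.
have hn : b * b^* = N%:~R by rewrite /N -pmulrn gnormnE.
have N0 : 0 < N by rewrite ltz_nat lt0n gnormn_eq0.
pose q1 := ((2 * p1 + N) %/ (2 * N))%Z; pose q2 := ((2 * p2 + N) %/ (2 * N))%Z.
have h1 : q1 * (2 * N) <= 2 * p1 + N by apply: lez_floor; lia.
have h2 : 2 * p1 + N < (q1 + 1) * (2 * N) by apply: ltz_ceil; lia.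
have h3 : q2 * (2 * N) <= 2 * p2 + N by apply: lez_floor; lia.
have h4 : 2 * p2 + N < (q2 + 1) * (2 * N) by apply: ltz_ceil; lia.
pose q : algC := q1%:~R + 'i * q2%:~R.
have Zq : q \in Zi by apply/ZiP; exists q1, q2.
have Zr : a - b * q \in Zi by rewrite rpredB ?rpredM.
exists q, (a - b * q); split => //; first by rewrite addrC subrK.
set r := a - b * q; set u := p1 - N * q1; set w := p2 - N * q2.
have er : r * b^* = u%:~R + 'i * w%:~R.
  by rewrite /r /u /w /q mulrBl ep mulrAC hn !rmorphB !rmorphM /=; ring.
have /eqP : ((gnormn r * n)%:Z)%:~R = (u ^+ 2 + w ^+ 2)%:~R :> algC.
  rewrite -gnorm_rect -er gnormM gnorm_conj -!gnormnE ?Zi_conj // -natrM.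
  by rewrite pmulrn.
rewrite eqr_int => /eqP e2.
suff : (2 * gnormn r * n <= n * n)%N by rewrite leq_pmul2r // -ltz_nat.
suff : ((2 * gnormn r * n)%:Z <= (n * n)%:Z)%R by rewrite lez_nat.
rewrite -mulnA PoszM e2 PoszM -/N !expr2.
have : 0 <= (N - 2 * u) * (N + 2 * u) by apply: mulr_ge0; lia.
have : 0 <= (N - 2 * w) * (N + 2 * w) by apply: mulr_ge0; lia.
rewrite !mulrBl !mulrDr; lia.
Qed.

Definition gdvd d x := exists2 c, c \in Zi & x = d * c.

Lemma gdvd_refl d : gdvd d d. Proof. by exists 1; rewrite ?rpred1 ?mulr1. Qed.
Lemma gdvd0 d : gdvd d 0. Proof. by exists 0; rewrite ?rpred0 ?mulr0. Qed.
Lemma gdvd_trans a b c : gdvd a b -> gdvd b c -> gdvd a c.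
Proof. by move=> [x Zx ->] [y Zy ->]; exists (x * y); rewrite ?rpredM ?mulrA. Qed.

Lemma Zi_bezout a b : a \in Zi -> b \in Zi -> exists g x y,
  [/\ x \in Zi, y \in Zi, g = a * x + b * y, gdvd g a & gdvd g b].
Proof.
move: {2}(gnormn b).+1 (ltnSn (gnormn b)) => n; elim: n a b => // n IH a b ltbn Za Zb.
have [->|b0] := eqVneq b 0.
  exists a, 1, 0; rewrite rpred1 rpred0 mulr1 mulr0 addr0.
  by split=> //; [exact: gdvd_refl | exact: gdvd0].
have [q [r [Zq Zr ea le]]] := Zi_divmod Za Zb b0.
have b_gt0 : (0 < gnormn b)%N by rewrite lt0n gnormn_eq0.
have ltrn : (gnormn r < n)%N by lia.
have [g [x [y [Zx Zy eg [c1 Zc1 eb] [c2 Zc2 er]]]]] := IH b r ltrn Zb Zr.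
exists g, y, (x - q * y); split => //; first by rewrite rpredB ?rpredM.
- by rewrite eg [r](_ : _ = a - b * q) ?ea; ring.
- by exists (c1 * q + c2); rewrite ?rpredD ?rpredM // ea eb er; ring.
- by exists c1.
Qed.

Lemma Zi_gauss a b c x y : b \in Zi -> c \in Zi -> x \in Zi -> y \in Zi ->
  a * x + b * y = 1 -> gdvd a (b * c) -> gdvd a c.
Proof.
move=> Zb Zc Zx Zy e [k Zk ek].
exists (c * x + k * y); first by rewrite rpredD ?rpredM.
transitivity ((a * x + b * y) * c); first by rewrite e mul1r.
transitivity (a * (c * x) + (b * c) * y); first ring.
by rewrite ek; ring.
Qed.

(* Split off the gcd [g] of [d] and [mu]: the cofactor of [mu] is coprime to
   that of [d], so it divides the conjugate of the latter. *)
Lemma gdvd_gnorm_divisor mu d : mu \in Zi -> d \in Zi -> mu != 0 ->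
  gdvd (gnorm mu) (gnorm d) -> exists2 e, gdvd e d & gnorm e = gnorm mu.
Proof.
move=> Zmu Zd mu0 [k Zk ek].
have [g [x [y [Zx Zy eg [d1 Zd1 ed] [m1 Zm1 emu]]]]] := Zi_bezout Zd Zmu.
have g0 : g != 0 by apply: contraNneq mu0 => g0; rewrite emu g0 mul0r.
have cop : m1 * y + d1 * x = 1.
  by apply: (mulfI g0); rewrite mulr1 mulrDr !mulrA -ed -emu addrC eg.
have ng0 : gnorm g != 0 by rewrite gnorm_eq0.
have ed1 : gnorm d1 = gnorm m1 * k.
  by move: ek; rewrite ed emu !gnormM -mulrA => /(mulfI ng0).
have dvd_m1 : gdvd m1 (d1 * d1^*).
  by exists (m1^* * k); rewrite ?rpredM ?Zi_conj // mulrA -ed1.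
have [kap Zkap ekap] := Zi_gauss Zd1 (Zi_conj Zd1) Zy Zx cop dvd_m1.
exists (g * m1^*); last by rewrite emu !gnormM gnorm_conj.
exists kap^*; first exact: Zi_conj.
by rewrite ed -mulrA -[d1]conjCK ekap rmorphM.
Qed.

Section Vectors.
Variable n : nat.
Implicit Types (s x z u w c : 'I_n -> algC).

Definition gvec x := forall i, x i \in Zi.
Definition scalev a x : 'I_n -> algC := fun i => a * x i.
Definition conjv x : 'I_n -> algC := fun i => (x i)^*.
Definition subv u a w : 'I_n -> algC := fun i => u i - a * w i.

Lemma gvec_scalev a x : a \in Zi -> gvec x -> gvec (scalev a x).
Proof. by move=> Za Zx i; rewrite rpredM. Qed.
Lemma gvec_conjv x : gvec x -> gvec (conjv x).
Proof. by move=> Zx i; apply: Zi_conj. Qed.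
Lemma gvec_subv u a w : gvec u -> a \in Zi -> gvec w -> gvec (subv u a w).
Proof. by move=> Zu Za Zw i; rewrite rpredB ?rpredM. Qed.

Definition hform s x z := \sum_i s i * ((x i)^* * z i).

Lemma hformZr s x a z : hform s x (scalev a z) = a * hform s x z.
Proof. by rewrite /hform mulr_sumr; apply: eq_bigr => i _; rewrite /scalev; ring. Qed.
Lemma hformZl s a x z : hform s (scalev a x) z = a^* * hform s x z.
Proof.
by rewrite /hform mulr_sumr; apply: eq_bigr => i _; rewrite /scalev rmorphM; ring.
Qed.
Lemma hformBr s x u a w : hform s x (subv u a w) = hform s x u - a * hform s x w.
Proof.
rewrite /hform mulr_sumr -sumrB; apply: eq_bigr => i _; rewrite /subv; ring.
Qed.
Lemma hformBl s u a w x : hform s (subv u a w) x = hform s u x - a^* * hform s w x.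
Proof.
rewrite /hform mulr_sumr -sumrB; apply: eq_bigr => i _.
by rewrite /subv rmorphB rmorphM; ring.
Qed.
Lemma hformC s x z : (forall i, (s i)^* = s i) -> hform s z x = (hform s x z)^*.
Proof.
move=> sR; rewrite /hform rmorph_sum; apply: eq_bigr => i _.
by rewrite !rmorphM /= sR conjCK; ring.
Qed.
Lemma eq_hform s x1 x2 z1 z2 : x1 =1 x2 -> z1 =1 z2 -> hform s x1 z1 = hform s x2 z2.
Proof. by move=> e1 e2; apply: eq_bigr => i _; rewrite e1 e2. Qed.
Lemma hform0l s x z : (forall i, x i = 0) -> hform s x z = 0.
Proof. by move=> x0; rewrite /hform big1 // => i _; rewrite x0 rmorph0 !mul0r mulr0. Qed.
Lemma Zi_hform s x z : gvec s -> gvec x -> gvec z -> hform s x z \in Zi.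
Proof.
by move=> Zs Zx Zz; apply: rpred_sum => i _; rewrite !rpredM ?Zi_conj.
Qed.

Lemma exists_neq0_hform s x : hform s x x != 0 -> exists i, x i != 0.
Proof.
move=> nz; apply/existsP; apply: contraNT nz => /existsPn x0.
by rewrite hform0l // => i; apply/eqP/negPn/x0.
Qed.

End Vectors.

Notation hdot := (hform (fun=> 1)).

Lemma hdot_ge0 n (x : 'I_n -> algC) : 0 <= hdot x x.
Proof. by apply: sumr_ge0 => i _; rewrite mul1r -normCKC exprn_ge0. Qed.

Lemma hdot_eq0 n (x : 'I_n -> algC) : hdot x x = 0 -> forall i, x i = 0.
Proof.
move=> /eqP; rewrite psumr_eq0 => [/allP x0 i|i _]; last first.
  by rewrite mul1r -normCKC exprn_ge0.
by move: (x0 i (mem_index_enum i)); rewrite mul1r mulf_eq0 conjC_eq0 orbb => /eqP.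
Qed.

Lemma Zi_hdot n (x z : 'I_n -> algC) : gvec x -> gvec z -> hdot x z \in Zi.
Proof. by apply: Zi_hform => i; exact: rpred1. Qed.

Definition primitive n (x : 'I_n -> algC) := exists2 c, gvec c & hdot c x = 1.

Lemma hdotC n (x z : 'I_n -> algC) : hdot z x = (hdot x z)^*.
Proof. by apply: hformC => i; rewrite conjC1. Qed.

Lemma gvec_gcd n (x : 'I_n -> algC) : gvec x ->
  exists g c, [/\ gvec c, g = \sum_i x i * c i & forall i, gdvd g (x i)].
Proof.
elim: n x => [|n IH] x Zx.
  exists 0, (fun=> 0); split; [by move=> i; exact: rpred0 | by rewrite big_ord0 | by case].
have [g' [c' [Zc' eg' dvdg']]] := IH (x \o lift ord_max) (fun i => Zx _).
have Zg' : g' \in Zi by rewrite eg' rpred_sum // => i _; rewrite rpredM ?Zc' ?Zx.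
have [g [a [b [Za Zb eg dvd1 dvd2]]]] := Zi_bezout Zg' (Zx ord_max).
pose c i := if unlift ord_max i is Some j then c' j * a else b.
exists g, c; split.
- by move=> i; rewrite /c; case: (unliftP ord_max i) => [j|] _; rewrite ?rpredM.
- rewrite big_ord_recr /= /c unlift_none eg eg' mulr_suml; congr (_ + _).
  apply: eq_bigr => i _; have -> : widen_ord (leqnSn n) i = lift ord_max i.
    by apply: val_inj; rewrite [RHS]lift_max.
  by rewrite liftK mulrA.
- move=> i; case: (unliftP ord_max i) => [j ->|->] //.
  exact: gdvd_trans dvd1 (dvdg' j).
Qed.

Lemma gvec_primitive_factor n (x : 'I_n -> algC) : gvec x -> (exists i, x i != 0) ->
  exists g x', [/\ g \in Zi, g != 0, gvec x', primitive x' & x =1 scalev g x'].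
Proof.
move=> Zx [i0 xi0]; have [g [c [Zc eg dvdg]]] := gvec_gcd Zx.
have g0 : g != 0.
  by apply: contraNneq xi0 => g0; case: (dvdg i0) => k _ ->; rewrite g0 mul0r.
have Zg : g \in Zi by rewrite eg rpred_sum // => i _; rewrite rpredM ?Zc ?Zx.
pose x' := scalev g^-1 x.
have ex i : x i = g * x' i by rewrite /x' /scalev mulVKf.
exists g, x'; split => //.
  by move=> i; rewrite /x' /scalev; case: (dvdg i) => k Zk ->; rewrite mulKf.
exists (conjv c); first exact: gvec_conjv.
apply: (mulfI g0); rewrite mulr1 mulr_sumr [RHS]eg; apply: eq_bigr => i _.
by rewrite /conjv conjCK ex; ring.
Qed.

(* Entries addressed by natural numbers, so that [ring] sees coordinate
   expressions of fixed-size vectors as polynomials. *)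
Definition vnth n (x : 'I_n.+1 -> algC) (k : nat) := x (inord k).

Lemma vnthE n (x : 'I_n.+1 -> algC) (i : 'I_n.+1) : x i = vnth x i.
Proof. by rewrite /vnth inord_val. Qed.
Lemma vnth_conjv n (x : 'I_n.+1 -> algC) k : vnth (conjv x) k = (vnth x k)^*.
Proof. by []. Qed.

Lemma hdot3E (x z : 'I_3 -> algC) :
  hdot x z = (vnth x 0)^* * vnth z 0 + (vnth x 1)^* * vnth z 1 + (vnth x 2)^* * vnth z 2.
Proof. by rewrite /hform !big_ord_recr big_ord0 /= !(vnthE x) !(vnthE z) /=; ring. Qed.

Definition cross (x z : 'I_3 -> algC) : 'I_3 -> algC := fun i =>
  match val i with
  | 0 => vnth x 1 * vnth z 2 - vnth x 2 * vnth z 1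
  | 1 => vnth x 2 * vnth z 0 - vnth x 0 * vnth z 2
  | _ => vnth x 0 * vnth z 1 - vnth x 1 * vnth z 0
  end.

Lemma vnth_cross0 x z : vnth (cross x z) 0 = vnth x 1 * vnth z 2 - vnth x 2 * vnth z 1.
Proof. by rewrite /vnth /cross /= inordK. Qed.
Lemma vnth_cross1 x z : vnth (cross x z) 1 = vnth x 2 * vnth z 0 - vnth x 0 * vnth z 2.
Proof. by rewrite /vnth /cross /= inordK. Qed.
Lemma vnth_cross2 x z : vnth (cross x z) 2 = vnth x 0 * vnth z 1 - vnth x 1 * vnth z 0.
Proof. by rewrite /vnth /cross /= inordK. Qed.
Definition vnth_crossE := (vnth_cross0, vnth_cross1, vnth_cross2).

Lemma gvec_vnth n (x : 'I_n.+1 -> algC) k : gvec x -> vnth x k \in Zi.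
Proof. by apply. Qed.

Lemma gvec_cross x z : gvec x -> gvec z -> gvec (cross x z).
Proof.
by move=> Zx Zz i; rewrite /cross; case: (val i) => [|[|k]]; rewrite rpredB ?rpredM ?gvec_vnth.
Qed.

Definition hcross x z := conjv (cross x z).

Lemma hdot_hcrossl x z : hdot x (hcross x z) = 0.
Proof. by rewrite hdot3E !vnth_conjv !vnth_crossE !rmorphB !rmorphM; ring. Qed.
Lemma hdot_hcrossr x z : hdot z (hcross x z) = 0.
Proof. by rewrite hdot3E !vnth_conjv !vnth_crossE !rmorphB !rmorphM; ring. Qed.

Lemma hdot_hcross x z :
  hdot (hcross x z) (hcross x z) = hdot x x * hdot z z - hdot x z * hdot z x.
Proof.
by rewrite !hdot3E !vnth_conjv !vnth_crossE !conjCK !rmorphB !rmorphM; ring.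
Qed.

(* Expansion of [y] in the orthogonal basis [x], [z - (x.z / x.x) x], [hcross x z],
   with denominators cleared. *)
Lemma hcross_decomposition x z y (i : 'I_3) :
  (hdot x x * hdot z z - hdot x z * hdot z x) * y i =
  (hdot z z * hdot x y - hdot x z * hdot z y) * x i
  + (hdot x x * hdot z y - hdot z x * hdot x y) * z i
  + hcross x z i * hdot (hcross x z) y.
Proof.
rewrite !hdot3E /hcross ?vnth_conjv ?vnth_crossE ?conjCK ?rmorphB ?rmorphM /conjv.
rewrite !(vnthE y i) !(vnthE x i) !(vnthE z i).
by case: i => [[|[|[|//]]] hi] /=; rewrite ?vnth_crossE ?rmorphB ?rmorphM; ring.
Qed.

Lemma cross_conjv_cross v b k : (k < 3)%N ->
  vnth (cross (conjv v) (cross v b)) k = hdot v b * vnth v k - hdot v v * vnth b k.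
Proof.
rewrite !hdot3E; case: k => [|[|[|//]]] _;
  rewrite !vnth_crossE ?vnth_conjv ?vnth_crossE; ring.
Qed.

Lemma exists_orthogonal (v : 'I_3 -> algC) :
  gvec v -> exists u, [/\ gvec u, hdot v u = 0 & hdot u u != 0].
Proof.
move=> Zv; have [/andP[/eqP v1 /eqP v2]|v12] := boolP ((vnth v 1 == 0) && (vnth v 2 == 0)).
  exists (fun i : 'I_3 => (i == 1 :> nat)%:R); split.
  - by move=> i; exact: rpred_nat.
  - by rewrite hdot3E /vnth !inordK //= -/(vnth v 1) v1 rmorph0; ring.
  - by rewrite hdot3E /vnth !inordK //= rmorph0 rmorph1 !mul0r mul1r add0r addr0 oner_eq0.
exists (fun i : 'I_3 => match nat_of_ord i with 0 => 0 | 1 => (vnth v 2)^* | _ => - (vnth v 1)^* end).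
split.
- move=> i; case: (nat_of_ord i) => [|[|?]]; rewrite ?rpred0 ?rpredN //.
  - exact: (Zi_conj (gvec_vnth 2 Zv)).
  - exact: (Zi_conj (gvec_vnth 1 Zv)).
- by rewrite hdot3E /vnth !inordK //=; ring.
- rewrite hdot3E /vnth !inordK //= -!/(vnth v _) rmorph0 mul0r add0r rmorphN /= !conjCK.
  rewrite mulrNN paddr_eq0 -?normCK ?exprn_ge0 // !normCK !mulf_eq0 !conjC_eq0 !orbb.
  by rewrite andbC.
Qed.

Lemma hdot_scalev n a (x : 'I_n -> algC) : hdot (scalev a x) (scalev a x) = gnorm a * hdot x x.
Proof. by rewrite hformZl hformZr /gnorm; ring. Qed.

Lemma extend_orthogonal_pair mu (v1 v2 : 'I_3 -> algC) :
  mu \in Zi -> mu != 0 -> gvec v1 -> gvec v2 ->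
  hdot v1 v1 = gnorm mu -> hdot v2 v2 = gnorm mu -> hdot v1 v2 = 0 ->
  exists v3, [/\ gvec v3, hdot v3 v3 = gnorm mu, hdot v1 v3 = 0 & hdot v2 v3 = 0].
Proof.
move=> Zmu mu0 Zv1 Zv2 e11 e22 e12; set lam := gnorm mu in e11 e22 *.
have lam0 : lam != 0 by rewrite gnorm_eq0.
have e21 : hdot v2 v1 = 0 by rewrite hdotC e12 conjC0.
set w := hcross v1 v2.
have eww : hdot w w = lam * lam by rewrite hdot_hcross e11 e22 e12 e21 mulr0 subr0.
have [g [u [Zg g0 Zu [x Zx exu] ewu]]] : exists g u, [/\ g \in Zi, g != 0, gvec u,
    primitive u & w =1 scalev g u].
  apply: gvec_primitive_factor; first exact/gvec_conjv/gvec_cross.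
  by apply: (@exists_neq0_hform _ (fun=> 1)); rewrite eww mulf_neq0.
have eux : hdot u x = 1 by rewrite hdotC exu conjC1.
have ewx : hdot w x = g^* by rewrite (eq_hform _ ewu (frefl x)) hformZl eux mulr1.
pose k := gnorm g / lam.
have Zku i : k * u i \in Zi.
  have := hcross_decomposition v1 v2 x i.
  rewrite -/w e11 e22 e12 e21 !mul0r !subr0 ewx ewu /scalev => e.
  have -> : k * u i = lam * x i - hdot v1 x * v1 i - hdot v2 x * v2 i.
    apply: (mulfI lam0); rewrite /k mulrA mulrCA divff // mulr1.
    by rewrite !mulrBr mulrA e /gnorm; ring.
  have Zlam : lam \in Zi by exact: Zi_gnorm.
  by rewrite !rpredB ?(rpredM Zlam) ?rpredM ?Zi_hdot ?Zv1 ?Zv2 ?Zx.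
have Zk : k \in Zi.
  rewrite -[k]mulr1 -exu /hform mulr_sumr rpred_sum // => i _.
  by rewrite mul1r mulrCA rpredM ?Zi_conj.
have [e [c Zc ege] ee] : exists2 e, gdvd e g & gnorm e = lam.
  by apply: gdvd_gnorm_divisor => //; exists k => //; rewrite /k mulrC divfK.
have e0 : e != 0 by apply: contraNneq lam0 => e0; rewrite -ee e0 /gnorm mul0r.
exists (scalev e^-1 w); split.
- by move=> i; rewrite /scalev ewu ege /scalev mulrA mulKf // rpredM.
- by rewrite hdot_scalev eww gnormV ee mulKf.
- by rewrite hformZr hdot_hcrossl mulr0.
- by rewrite hformZr hdot_hcrossr mulr0.
Qed.

Definition lsign (i : 'I_4) : algC := if i == 3 :> nat then -1 else 1.

Notation ldot := (hform lsign).

Lemma lsign_conj i : (lsign i)^* = lsign i.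
Proof. by rewrite /lsign; case: ifP; rewrite ?rmorphN rmorph1. Qed.
Lemma lsign_sqr i : lsign i * lsign i = 1.
Proof. by rewrite /lsign; case: ifP; rewrite ?mulrNN mulr1. Qed.
Lemma gvec_lsign : gvec lsign.
Proof. by move=> i; rewrite /lsign; case: ifP; rewrite ?rpredN rpred1. Qed.

Lemma ldotC (x z : 'I_4 -> algC) : ldot z x = (ldot x z)^*.
Proof. exact/hformC/lsign_conj. Qed.
Lemma Zi_ldot (x z : 'I_4 -> algC) : gvec x -> gvec z -> ldot x z \in Zi.
Proof. exact/Zi_hform/gvec_lsign. Qed.

Lemma ldotE (x z : 'I_4 -> algC) : ldot x z = (vnth x 0)^* * vnth z 0
  + (vnth x 1)^* * vnth z 1 + (vnth x 2)^* * vnth z 2 - (vnth x 3)^* * vnth z 3.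
Proof. by rewrite /hform !big_ord_recr big_ord0 !(vnthE x) !(vnthE z) /lsign /=; ring. Qed.

Definition vext (b : 'I_3 -> algC) (t : algC) : 'I_4 -> algC := fun i =>
  match nat_of_ord i with 0 => vnth b 0 | 1 => vnth b 1 | 2 => vnth b 2 | _ => t end.
Definition vtrunc (z : 'I_4 -> algC) : 'I_3 -> algC := fun i => vnth z i.

Lemma vnth_vext b t :
  [/\ vnth (vext b t) 0 = vnth b 0, vnth (vext b t) 1 = vnth b 1,
      vnth (vext b t) 2 = vnth b 2 & vnth (vext b t) 3 = t].
Proof. by rewrite /vnth /vext !inordK. Qed.
Lemma vnth_vtrunc z :
  [/\ vnth (vtrunc z) 0 = vnth z 0, vnth (vtrunc z) 1 = vnth z 1 & vnth (vtrunc z) 2 = vnth z 2].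
Proof. by rewrite /vnth /vtrunc !inordK. Qed.

Lemma ldot_vextl b t z : ldot (vext b t) z = hdot b (vtrunc z) - t^* * vnth z 3.
Proof.
by rewrite ldotE hdot3E; have [-> -> -> ->] := vnth_vext b t; have [-> -> ->] := vnth_vtrunc z.
Qed.
Lemma ldot_vext b t b' t' : ldot (vext b t) (vext b' t') = hdot b b' - t^* * t'.
Proof.
by rewrite ldotE hdot3E; have [-> -> -> ->] := vnth_vext b t; have [-> -> -> ->] := vnth_vext b' t'.
Qed.
Lemma ldot_vtrunc z : ldot z z = hdot (vtrunc z) (vtrunc z) - (vnth z 3)^* * vnth z 3.
Proof. by rewrite ldotE hdot3E; have [-> -> ->] := vnth_vtrunc z. Qed.

Lemma gvec_vext b t : gvec b -> t \in Zi -> gvec (vext b t).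
Proof.
by move=> Zb Zt i; rewrite /vext; case: (nat_of_ord i) => [|[|[|?]]] //; apply: gvec_vnth.
Qed.
Lemma gvec_vtrunc z : gvec z -> gvec (vtrunc z).
Proof. by move=> Zz i; apply: gvec_vnth. Qed.

Definition mnth n (M : 'M[algC]_n.+1) (p q : nat) := M (inord p) (inord q).

Lemma mnthE n (M : 'M[algC]_n.+1) i j : M i j = mnth M i j.
Proof. by rewrite /mnth !inord_val. Qed.

Lemma det4E (M : 'M[algC]_4) : \det M =
  mnth M 0 0 * (mnth M 1 1 * (mnth M 2 2 * mnth M 3 3 - mnth M 2 3 * mnth M 3 2)
    - mnth M 1 2 * (mnth M 2 1 * mnth M 3 3 - mnth M 2 3 * mnth M 3 1)
    + mnth M 1 3 * (mnth M 2 1 * mnth M 3 2 - mnth M 2 2 * mnth M 3 1))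
  - mnth M 0 1 * (mnth M 1 0 * (mnth M 2 2 * mnth M 3 3 - mnth M 2 3 * mnth M 3 2)
    - mnth M 1 2 * (mnth M 2 0 * mnth M 3 3 - mnth M 2 3 * mnth M 3 0)
    + mnth M 1 3 * (mnth M 2 0 * mnth M 3 2 - mnth M 2 2 * mnth M 3 0))
  + mnth M 0 2 * (mnth M 1 0 * (mnth M 2 1 * mnth M 3 3 - mnth M 2 3 * mnth M 3 1)
    - mnth M 1 1 * (mnth M 2 0 * mnth M 3 3 - mnth M 2 3 * mnth M 3 0)
    + mnth M 1 3 * (mnth M 2 0 * mnth M 3 1 - mnth M 2 1 * mnth M 3 0))
  - mnth M 0 3 * (mnth M 1 0 * (mnth M 2 1 * mnth M 3 2 - mnth M 2 2 * mnth M 3 1)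
    - mnth M 1 1 * (mnth M 2 0 * mnth M 3 2 - mnth M 2 2 * mnth M 3 0)
    + mnth M 1 2 * (mnth M 2 0 * mnth M 3 1 - mnth M 2 1 * mnth M 3 0)).
Proof.
rewrite (expand_det_row _ 0) !big_ord_recr big_ord0 /= add0r /cofactor.
do 2 rewrite !(expand_det_row _ 0) !big_ord_recr big_ord0 /= !add0r /cofactor.
by rewrite !det_mx11 !mxE !(mnthE M) /= !big_ord0 /bump /=; ring.
Qed.

Definition col4 (a b c d : 'I_4 -> algC) (k : nat) :=
  match k with 0 => a | 1 => b | 2 => c | _ => d end.

Definition mx4 (a b c d : 'I_4 -> algC) : 'M[algC]_4 :=
  \matrix_(i, j) col4 a b c d j i.

Definition lgram (X : 'M[algC]_4) :=
  (map_mx Num.conj_op X)^T *m diag_mx (\row_i lsign i) *m X.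

Lemma mnth_lgram a b c d p q : (p < 4)%N -> (q < 4)%N ->
  mnth (lgram (mx4 a b c d)) p q = ldot (col4 a b c d p) (col4 a b c d q).
Proof.
move=> lt_p lt_q; rewrite /mnth /lgram mul_mx_diag /hform !mxE; apply: eq_bigr => k _.
by rewrite !mxE !inordK //; ring.
Qed.

Lemma det_lgram X : \det (lgram X) = - gnorm (\det X).
Proof.
rewrite /lgram !det_mulmx det_tr det_map_mx det_diag.
have -> : \prod_i (\row_i lsign i) 0 i = -1.
  by rewrite (eq_bigr lsign) => [|i _]; rewrite ?mxE // !big_ord_recr big_ord0 /lsign /=; ring.
by rewrite /gnorm; ring.
Qed.

Lemma gnorm_det_mx4 n y x w :
  ldot n n = 0 -> ldot n y = 1 -> ldot y n = 1 ->
  ldot n x = 0 -> ldot y x = 0 -> ldot n w = 0 -> ldot y w = 0 ->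
  gnorm (\det (mx4 n y x w)) = ldot x x * ldot w w - ldot x w * ldot w x.
Proof.
move=> enn eny eyn enx eyx enw eyw.
have exn : ldot x n = 0 by rewrite ldotC enx conjC0.
have exy : ldot x y = 0 by rewrite ldotC eyx conjC0.
have ewn : ldot w n = 0 by rewrite ldotC enw conjC0.
have ewy : ldot w y = 0 by rewrite ldotC eyw conjC0.
apply: oppr_inj; rewrite -det_lgram det4E !mnth_lgram //=.
by rewrite enn eny eyn enx eyx enw eyw exn exy ewn ewy; ring.
Qed.

Lemma det_mx4_dup a b c d (k : nat) :
  (k < 3)%N -> col4 a b c d k = d -> \det (mx4 a b c d) = 0.
Proof.
move=> lt_k3 ekd; rewrite -det_tr; apply: (@determinant_alternate _ _ _ (inord k) ord_max).
  by apply/eqP => /(congr1 val); rewrite /= inordK //; move: lt_k3; case: k {ekd} => [|[|[|]]].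
by move=> j; rewrite !mxE inordK ?ekd // (ltn_trans lt_k3).
Qed.

Definition lcross (a b c : 'I_4 -> algC) : 'I_4 -> algC :=
  fun i => lsign i * (cofactor (mx4 a b c (fun=> 0)) i ord_max)^*.

Lemma ldot_lcross a b c w : ldot (lcross a b c) w = \det (mx4 a b c w).
Proof.
have col' : col' ord_max (mx4 a b c w) = col' ord_max (mx4 a b c (fun=> 0)).
  by apply/matrixP => k l; rewrite !mxE lift_max; case: l => [[|[|[|//]]] ?].
rewrite (expand_det_col _ ord_max) /hform; apply: eq_bigr => i _.
rewrite /lcross rmorphM /= conjCK lsign_conj !mulrA lsign_sqr mul1r.
by rewrite /cofactor col' [mx4 _ _ _ _ _ _]mxE /=; ring.
Qed.

Lemma Zi_det n (A : 'M[algC]_n) : (forall i j, A i j \in Zi) -> \det A \in Zi.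
Proof.
move=> ZA; apply: rpred_sum => s _.
by rewrite rpredM ?rpredX ?rpredN ?rpred1 //; apply: rpred_prod => i _.
Qed.

Lemma gvec_lcross a b c : gvec a -> gvec b -> gvec c -> gvec (lcross a b c).
Proof.
move=> Za Zb Zc i; rewrite rpredM ?gvec_lsign ?Zi_conj //.
rewrite rpredM ?rpredX ?rpredN ?rpred1 //; apply: Zi_det => k l.
by rewrite !mxE; case: (nat_of_ord _) => [|[|[|?]]] //=; exact: rpred0.
Qed.

Section HyperbolicPlane.

Variables (v a : 'I_3 -> algC) (nu : algC).
Hypotheses (Zv : gvec v) (Za : gvec a) (Znu : nu \in Zi) (nu0 : nu != 0).
Hypotheses (evv : hdot v v = gnorm nu) (eav : hdot a v = 1).

(* [n] is isotropic and [ldot y n = 1]: a hyperbolic pair, whose orthogonal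
   complement is positive definite. *)
Let n := vext v nu.
Let y := vext a 0.
Local Notation perp x := (ldot n x = 0 /\ ldot y x = 0).

Let Zn : gvec n. Proof. exact: gvec_vext. Qed.
Let Zy : gvec y. Proof. by apply: gvec_vext; rewrite ?rpred0. Qed.
Let enn : ldot n n = 0. Proof. by rewrite ldot_vext evv /gnorm mulrC subrr. Qed.
Let eyn : ldot y n = 1. Proof. by rewrite ldot_vext eav rmorph0 mul0r subr0. Qed.
Let eny : ldot n y = 1. Proof. by rewrite ldotC eyn conjC1. Qed.

Lemma perp_gnorm_hcross x : perp x ->
  hdot (hcross v (vtrunc x)) (hcross v (vtrunc x)) = gnorm nu * ldot x x.
Proof.
move=> [/eqP]; rewrite ldot_vextl subr_eq0 => /eqP evb _.
by rewrite hdot_hcross (hdotC v (vtrunc x)) evb evv ldot_vtrunc rmorphM /= conjCK /gnorm; ring.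
Qed.

Lemma perp_ge0 x : perp x -> 0 <= ldot x x.
Proof.
move=> px; rewrite -(pmulr_rge0 _ (gnorm_gt0 nu0)) -perp_gnorm_hcross //.
exact: hdot_ge0.
Qed.

(* An isotropic vector in the complement has [vtrunc x] parallel to [v], and
   then [ldot y x = 0] forces it to vanish. *)
Lemma perp_eq0 x : perp x -> ldot x x = 0 -> forall i, x i = 0.
Proof.
move=> px x0; have [enx eyx] := px.
set b := vtrunc x; set t := vnth x 3.
have evb : hdot v b = nu^* * t.
  by move: enx => /eqP; rewrite ldot_vextl subr_eq0 => /eqP.
have c0 : forall k, vnth (cross v b) k = 0.
  move=> k; apply/eqP; rewrite -conjC_eq0 -vnth_conjv; apply/eqP; apply: hdot_eq0.
  by rewrite perp_gnorm_hcross // x0 mulr0.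
have eb k : (k < 3)%N -> vnth b k = t / nu * vnth v k.
  move=> lt_k3; have := cross_conjv_cross v b lt_k3.
  have -> : vnth (cross (conjv v) (cross v b)) k = 0.
    by case: k lt_k3 => [|[|[|]]] // _; rewrite vnth_crossE !c0; ring.
  rewrite evv evb => /esym/eqP; rewrite subr_eq0 => /eqP e.
  have nn0 : gnorm nu != 0 by rewrite gnorm_eq0.
  by apply: (mulfI nn0); rewrite -e /gnorm; field.
have ebv : b =1 scalev (t / nu) v by move=> i; rewrite !(vnthE _ i) eb.
have t0 : t = 0.
  move: eyx; rewrite ldot_vextl rmorph0 mul0r subr0 -/b.
  rewrite (eq_hform _ (frefl a) ebv) hformZr eav mulr1 => /eqP.
  by rewrite mulf_eq0 invr_eq0 (negbTE nu0) orbF => /eqP.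
have [b0 b1 b2] := vnth_vtrunc x.
move=> i; rewrite (vnthE x i); case: i => [[|[|[|[|//]]]] ?] /=.
- by rewrite -b0 eb // t0 !mul0r.
- by rewrite -b1 eb // t0 !mul0r.
- by rewrite -b2 eb // t0 !mul0r.
- exact: t0.
Qed.

Lemma perp_nat x : gvec x -> perp x -> exists k : nat, ldot x x = k%:R.
Proof. by move=> Zx px; apply: Zi_nat_ge0; [exact: Zi_ldot | exact: perp_ge0]. Qed.

Lemma perp_dual x : primitive x -> perp x -> exists q, [/\ gvec q, perp q & ldot x q = 1].
Proof.
move=> [c Zc ecx] [enx eyx].
have exn : ldot x n = 0 by rewrite ldotC enx conjC0.
have exy : ldot x y = 0 by rewrite ldotC eyx conjC0.
pose z i := lsign i * c i.
have Zz : gvec z by move=> i; rewrite rpredM ?gvec_lsign.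
have exz : ldot x z = 1.
  rewrite -conjC1 -ecx -hdotC; apply: eq_bigr => i _.
  by transitivity (lsign i * lsign i * ((x i)^* * c i)); [rewrite /z; ring | rewrite lsign_sqr].
pose e := ldot y y.
exists (subv (subv z (ldot y z - e * ldot n z) n) (ldot n z) y); split.
- by apply: gvec_subv (gvec_subv Zz _ Zn) _ Zy; rewrite ?rpredB ?rpredM ?Zi_ldot.
- by split; rewrite !hformBr ?enn ?eny ?eyn -/e; ring.
- by rewrite !hformBr exz exn exy; ring.
Qed.

Lemma perp_lcross x : perp (lcross n y x) /\ ldot x (lcross n y x) = 0.
Proof.
have dup k d : (k < 3)%N -> col4 n y x d k = d -> ldot d (lcross n y x) = 0.
  by move=> lt_k3 ekd; rewrite ldotC ldot_lcross (det_mx4_dup lt_k3 ekd) conjC0.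
split; [split|].
- exact: (dup 0%N).
- exact: (dup 1%N).
- exact: (dup 2%N).
Qed.

Lemma gnorm_ldot_lcross x w : perp x -> perp w ->
  gnorm (ldot (lcross n y x) w) = ldot x x * ldot w w - ldot x w * ldot w x.
Proof.
by move=> [enx eyx] [enw eyw]; rewrite ldot_lcross (gnorm_det_mx4 enn eny eyn).
Qed.

Lemma perp_lcross_norm x m : primitive x -> perp x -> ldot x x = m%:R -> (1 < m)%N ->
  ldot (lcross n y x) (lcross n y x) = m%:R.
Proof.
move=> prx px exx lt1m; set r := lcross n y x; set rho := ldot r r.
have [pr exr] := perp_lcross x.
have erho : rho * rho = m%:R * rho.
  have := gnorm_ldot_lcross px pr; rewrite -/r exr mul0r subr0 exx /gnorm.
  by rewrite -ldotC.
have [rho0|/eqP rho_neq0] := rho =P 0; last by apply: (mulIf rho_neq0); rewrite erho.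
have [q [Zq pq exq]] := perp_dual prx px.
have [k ek] := perp_nat Zq pq.
have := gnorm_ldot_lcross px pq; rewrite -/r (hform0l _ _ (perp_eq0 pr rho0)).
rewrite exx ek (ldotC x q) exq conjC1 mulr1 /gnorm mul0r -natrM => /esym/eqP.
rewrite subr_eq0 (_ : 1 = 1%:R :> algC) // eqr_nat muln_eq1 => /andP[/eqP m1 _].
by move: lt1m; rewrite m1.
Qed.

(* With [ldot x q = 1] and [r := lcross n y x] of norm [m], reduce [ldot r q]
   modulo [m]: [s := q - t r] has [m * ldot s s = gnorm (ldot r s) + 1 <= m^2/2 + 1]. *)
Lemma perp_descent_step x m : gvec x -> primitive x -> perp x -> ldot x x = m%:R ->
  (1 < m)%N -> exists s m', [/\ gvec s, perp s, ldot s s = m'%:R & (0 < m' < m)%N].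
Proof.
move=> Zx prx px exx lt1m; set r := lcross n y x.
have Zr : gvec r := gvec_lcross Zn Zy Zx.
have [[enr eyr] exr] := perp_lcross x.
have err := perp_lcross_norm prx px exx lt1m; rewrite -/r in err.
have [q [Zq [enq eyq] exq]] := perp_dual prx px.
have m0 : (m%:R : algC) != 0 by rewrite pnatr_eq0 -lt0n ltnW.
have [t [rem [Zt Zrem erq le_rem]]] := Zi_divmod (Zi_ldot Zr Zq) (rpred_nat _ m) m0.
pose s := subv q t r.
have ps : perp s by split; rewrite hformBr ?enq ?enr ?eyq ?eyr mulr0 subr0.
have exs : ldot x s = 1 by rewrite hformBr exq exr mulr0 subr0.
have ers : ldot r s = rem by rewrite hformBr erq err; ring.
have [S eS] := perp_nat (gvec_subv Zq Zt Zr) ps.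
have := gnorm_ldot_lcross px ps; rewrite -/r ers exx eS (ldotC x s) exs conjC1 mulr1.
rewrite -(gnormnE Zrem) -natrM => /(congr1 (+%R^~ 1)); rewrite subrK natr1.
move=> /eqP; rewrite eqr_nat => /eqP eS'.
have gm : gnormn m%:R = (m * m)%N.
  by apply/eqP; rewrite -(eqr_nat algC) gnormnE ?rpred_nat // /gnorm conjC_nat natrM.
rewrite gm in le_rem.
exists s, S; split => //; first exact: gvec_subv.
apply/andP; split; first by move: eS'; rewrite lt0n; case: eqP => // ->; rewrite muln0.
rewrite ltnNge; apply/negP => le_mS.
have := leq_mul (leqnn m) le_mS; rewrite -eS'.
have : (2 * 2 <= m * m)%N by apply: leq_mul.
lia.
Qed.
Lemma perp_unit x m : gvec x -> perp x -> ldot x x = m%:R -> (0 < m)%N ->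
  exists f, [/\ gvec f, perp f & ldot f f = 1].
Proof.
elim/ltn_ind: m x => m IH x Zx [enx eyx] exx m_gt0.
have x_nz : exists i, x i != 0.
  by apply: (@exists_neq0_hform _ lsign); rewrite exx pnatr_eq0 -lt0n.
have [g [x' [Zg g0 Zx' prx' ex]]] := gvec_primitive_factor Zx x_nz.
have px' : perp x'.
  by split; apply: (mulfI g0); rewrite mulr0 -hformZr -(eq_hform _ (frefl _) ex).
have [m' exx'] := perp_nat Zx' px'.
have em : m = (gnormn g * m')%N.
  apply/eqP; rewrite -(eqr_nat algC) natrM gnormnE // -exx -exx' (eq_hform _ ex ex).
  by rewrite hformZl hformZr /gnorm; apply/eqP; ring.
have [m'_gt0 g_gt0] : (0 < m')%N /\ (0 < gnormn g)%N.
  by move: m_gt0; rewrite em muln_gt0 => /andP[].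
have [/eqP m'1|lt1m'] := leqP m' 1.
  by exists x'; rewrite exx' (_ : m' = 1%N) //; move: m'_gt0 m'1; lia.
have [s [m'' [Zs ps ess /andP[m''_gt0 lt_m''m']]]] := perp_descent_step Zx' prx' px' exx' lt1m'.
apply: (IH m'' _ s) => //; apply: (leq_trans lt_m''m').
by rewrite em leq_pmull.
Qed.

End HyperbolicPlane.

Lemma extend_primitive (v a : 'I_3 -> algC) nu : gvec v -> gvec a -> nu \in Zi -> nu != 0 ->
  hdot v v = gnorm nu -> hdot a v = 1 ->
  exists w, [/\ gvec w, hdot w w = gnorm nu & hdot v w = 0].
Proof.
move=> Zv Za Znu nu0 evv eav; set n := vext v nu; set y := vext a 0.
have enn : ldot n n = 0 by rewrite ldot_vext evv /gnorm mulrC subrr.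
have eyn : ldot y n = 1 by rewrite ldot_vext eav rmorph0 mul0r subr0.
have [u [Zu evu euu]] := exists_orthogonal Zv.
pose x0 := vext u 0; pose x := subv x0 (ldot y x0) n.
have enx0 : ldot n x0 = 0 by rewrite ldot_vext evu mulr0 subr0.
have enx : ldot n x = 0 by rewrite hformBr enx0 enn mulr0 subr0.
have eyx : ldot y x = 0 by rewrite hformBr eyn mulr1 subrr.
have Zy : gvec y by apply: gvec_vext; rewrite ?rpred0.
have Zx0 : gvec x0 by apply: gvec_vext; rewrite ?rpred0.
have Zx : gvec x := gvec_subv Zx0 (Zi_ldot Zy Zx0) (gvec_vext Zv Znu).
have exx : ldot x x = hdot u u.
  rewrite hformBl enx mulr0 subr0 hformBr (ldotC n x0) enx0 conjC0 mulr0 subr0.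
  by rewrite ldot_vext rmorph0 mul0r subr0.
have [m exm] := perp_nat nu0 evv Zx (conj enx eyx).
have m_gt0 : (0 < m)%N by rewrite lt0n -(eqr_nat algC) -exm exx.
have [f [Zf [enf _] eff]] := perp_unit Zv Za Znu nu0 evv eav Zx (conj enx eyx) exm m_gt0.
set b := vtrunc f; set t := vnth f 3.
have evb : hdot v b = nu^* * t by move: enf => /eqP; rewrite ldot_vextl subr_eq0 => /eqP.
have ebv : hdot b v = nu * t^* by rewrite hdotC evb rmorphM /= conjCK.
have ebb : hdot b b = 1 + t^* * t by rewrite -[1 in RHS]eff ldot_vtrunc subrK.
exists (subv (scalev nu b) t v); split.
- by apply: gvec_subv; rewrite ?gvec_vnth //; apply/gvec_scalev/gvec_vtrunc.
- rewrite hformBl !hformBr !hformZl !hformZr evb ebv ebb evv /gnorm; ring.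
- by rewrite hformBr hformZr evb evv /gnorm; ring.
Qed.

(* Divide [v] by its content [g]: then [gnorm g] divides [gnorm mu], and the
   divisor of [mu] of norm [gnorm g] leaves a primitive vector of norm [gnorm nu]. *)
Lemma extend_single mu (v : 'I_3 -> algC) : mu \in Zi -> mu != 0 -> gvec v ->
  hdot v v = gnorm mu -> exists w, [/\ gvec w, hdot w w = gnorm mu & hdot v w = 0].
Proof.
move=> Zmu mu0 Zv evv.
have v_nz : exists i, v i != 0 by apply: (@exists_neq0_hform _ (fun=> 1)); rewrite evv gnorm_eq0.
have [g [v' [Zg g0 Zv' [a Za eav] ev]]] := gvec_primitive_factor Zv v_nz.
have evv' : gnorm mu = gnorm g * hdot v' v'.
  by rewrite -evv (eq_hform _ ev ev) hformZl hformZr /gnorm; ring.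
have [e [nu Znu emu] ee] : exists2 e, gdvd e mu & gnorm e = gnorm g.
  by apply: gdvd_gnorm_divisor => //; exists (hdot v' v'); rewrite ?Zi_hdot.
have eD : hdot v' v' = gnorm nu.
  by apply: (mulfI (lt0r_neq0 (gnorm_gt0 g0))); rewrite -evv' emu gnormM ee.
have nu0 : nu != 0 by apply: contraNneq mu0 => nu0; rewrite emu nu0 mulr0.
have [w' [Zw' ew' evw']] := extend_primitive Zv' Za Znu nu0 eD eav.
exists (scalev g w'); split.
- exact: gvec_scalev.
- by rewrite hformZl hformZr ew' evv' eD /gnorm; ring.
- by rewrite (eq_hform _ ev (frefl _)) hformZl hformZr evw' !mulr0.
Qed.

Lemma icubeP n k lam (A : 'M[algC]_(n, k)) : icube lam A <->
  (forall j, gvec (fun i => A i j)) /\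
  (forall j j', hdot (fun i => A i j) (fun i => A i j') = lam *+ (j == j')).
Proof.
have adjE j j' : (adjmx A *m A) j j' = hdot (fun i => A i j) (fun i => A i j').
  by rewrite /adjmx !mxE; apply: eq_bigr => i _; rewrite !mxE mul1r.
split=> [[ZA eA]|[ZA eA]].
  by split=> [j i|j j']; [exact: ZA | rewrite -adjE eA mxE].
by split=> [i j|]; [exact: ZA | apply/matrixP => j j'; rewrite adjE eA mxE].
Qed.

Definition mx3 (c0 c1 c2 : 'I_3 -> algC) : 'M[algC]_3 :=
  \matrix_(i, j) (match nat_of_ord j with 0 => c0 | 1 => c1 | _ => c2 end) i.

Lemma icube_mx3 lam c0 c1 c2 : gvec c0 -> gvec c1 -> gvec c2 ->
  hdot c0 c0 = lam -> hdot c1 c1 = lam -> hdot c2 c2 = lam ->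
  hdot c0 c1 = 0 -> hdot c0 c2 = 0 -> hdot c1 c2 = 0 -> icube lam (mx3 c0 c1 c2).
Proof.
move=> Z0 Z1 Z2 e00 e11 e22 e01 e02 e12; apply/icubeP; split.
  by move=> [[|[|[|//]]] ?] i; rewrite mxE.
have e10 : hdot c1 c0 = 0 by rewrite hdotC e01 conjC0.
have e20 : hdot c2 c0 = 0 by rewrite hdotC e02 conjC0.
have e21 : hdot c2 c1 = 0 by rewrite hdotC e12 conjC0.
have colE j : (fun i => mx3 c0 c1 c2 i j) =1
    match nat_of_ord j with 0 => c0 | 1 => c1 | _ => c2 end by move=> i; rewrite mxE.
move=> j j'; rewrite (eq_hform _ (colE j) (colE j')).
by case: j => [[|[|[|//]]] ?]; case: j' => [[|[|[|//]]] ?].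
Qed.

Lemma icube_extends_refl n k lam (A : 'M[algC]_(n, k)) :
  icube lam A -> icube_extends k lam A.
Proof. by move=> iA; exists A, id; split => //; split => //; apply/matrixP => i j; rewrite mxE. Qed.

Lemma icube_extends_pair mu (A : 'M[algC]_(3, 2)) : mu \in Zi -> mu != 0 ->
  icube (gnorm mu) A -> icube_extends 3 (gnorm mu) A.
Proof.
move=> Zmu mu0 /icubeP[ZA eA].
set v1 := fun i => A i ord0; set v2 := fun i => A i ord_max.
have e11 : hdot v1 v1 = gnorm mu by rewrite eA.
have e22 : hdot v2 v2 = gnorm mu by rewrite eA.
have e12 : hdot v1 v2 = 0 by rewrite eA.
have [v3 [Z3 e33 e13 e23]] := extend_orthogonal_pair Zmu mu0 (ZA _) (ZA _) e11 e22 e12.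
exists (mx3 v1 v2 v3), (widen_ord (leqnSn 2)); split.
  exact: icube_mx3 (ZA _) (ZA _) Z3 e11 e22 e33 e12 e13 e23.
split; first by move=> j j' /(congr1 val) /= e; apply: val_inj.
apply/matrixP => i j; rewrite !mxE.
by case: j => [[|[|//]] ?]; rewrite /v1 /v2; congr (A _ _); apply: val_inj.
Qed.

Lemma icube_extends_single mu (A : 'M[algC]_(3, 1)) : mu \in Zi -> mu != 0 ->
  icube (gnorm mu) A -> icube_extends 3 (gnorm mu) A.
Proof.
move=> Zmu mu0 /icubeP[ZA eA]; set v := fun i => A i ord0.
have evv : hdot v v = gnorm mu by rewrite eA.
have [w [Zw eww evw]] := extend_single Zmu mu0 (ZA _) evv.
have [v3 [Z3 e33 e13 e23]] := extend_orthogonal_pair Zmu mu0 (ZA _) Zw evv eww evw.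
exists (mx3 v w v3), (fun=> ord0); split.
  exact: icube_mx3 (ZA _) Zw Z3 evv eww e33 evw e13 e23.
split; first by move=> j j' _; rewrite !ord1.
by apply/matrixP => i j; rewrite !mxE ord1.
Qed.

Theorem mainTheorem4 (lam : nat) (hlam : (0 < lam)%N)
  (hsq : exists a b : int, lam%:Z = a ^+ 2 + b ^+ 2)
  (k : nat) (hk1 : (1 <= k)%N) (hk3 : (k <= 3)%N)
  (A : 'M[algC]_(3, k)) (hA : icube lam%:R A) :
  icube_extends 3 lam%:R A.
Proof.
have [a [b eab]] := hsq; pose mu : algC := a%:~R + 'i * b%:~R.
have Zmu : mu \in Zi by apply/ZiP; exists a, b.
have emu : gnorm mu = lam%:R by rewrite gnorm_rect -eab.
have mu0 : mu != 0 by rewrite -gnorm_eq0 emu pnatr_eq0 -lt0n.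
rewrite -emu in hA *.
move: hk1 hk3 A hA; case: k => [|[|[|[|k]]]] // _ _ A hA.
- exact: icube_extends_single.
- exact: icube_extends_pair.
- exact: icube_extends_refl.
Qed.
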